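(* If a finite group $G$ is a $Q\sigma T$-group, then every quotient $G/N$ of $G$ by a normal subgroup $N$ is also a $Q\sigma T$-group.
   Context: $\sigma=\{\sigma_i\mid i\in I\}$ is a partition of the set of all primes. A group is $\sigma$-primary if it is a $\sigma_i$-group for some $i$. $A_G$ is the core of $A$ in $G$. $A$ is $\sigma$-subnormal in $G$ if there is a chain $A=A_0\le\cdots\le A_n=G$ with, for each $i$, $A_{i-1}\trianglelefteq A_i$ or $A_i/(A_{i-1})_{A_i}$ $\sigma$-primary. $A$ is modular in $G$ if (1) $\langle X, A\cap Z\rangle=\langle X,A\rangle\cap Z$ for all $X\le Z\le G$, and (2) $\langle A, Y\cap Z\rangle=\langle A,Y\rangle\cap Z$ for all $Y,Z\le G$ with $A\le Z$. $A$ is $\sigma$-quasinormal in $G$ if it is $\sigma$-subnormal and modular. $G$ is a $Q\sigma T$-group if whenever $H$ is $\sigma$-quasinormal in $K$ and $K$ is $\sigma$-quasinormal in $G$, $H$ is $\sigma$-quasinormal in $G$. *)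

From mathcomp Require Import all_boot all_fingroup.
Set Implicit Arguments. Unset Strict Implicit. Unset Printing Implicit Defensive.
Local Open Scope group_scope.

(* A partition sigma = {sigma_i | i in I} of the primes is encoded by the map
   s : nat -> I sending a prime p to the index i of the block sigma_i with
   p \in sigma_i (values of s on non-primes are irrelevant). *)

Definition sigma_primary_nat (I : Type) (s : nat -> I) (n : nat) : Prop :=
  exists i : I, forall p, p \in primes n -> s p = i.

Definition sigma_step (I : Type) (s : nat -> I) (gT : finGroupType)
    (A B : {group gT}) : Prop :=
  A \subset B /\
  (A <| B \/ sigma_primary_nat s #|B / gcore A B|).

Inductive sigma_subnormal (I : Type) (s : nat -> I) (gT : finGroupType)
    : {group gT} -> {group gT} -> Prop :=
  | ssn_refl (G : {group gT}) : sigma_subnormal s G G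
  | ssn_step (A B G : {group gT}) :
      sigma_step s A B -> sigma_subnormal s B G -> sigma_subnormal s A G.

Definition modular (gT : finGroupType) (A G : {group gT}) : Prop :=
  A \subset G /\
  (forall X Z : {group gT}, X \subset Z -> Z \subset G ->
     X <*> (A :&: Z) = (X <*> A) :&: Z) /\
  (forall Y Z : {group gT}, Y \subset G -> Z \subset G -> A \subset Z ->
     A <*> (Y :&: Z) = (A <*> Y) :&: Z).

Definition sigma_quasinormal (I : Type) (s : nat -> I) (gT : finGroupType)
    (A G : {group gT}) : Prop :=
  sigma_subnormal s A G /\ modular A G.

Definition QsigmaT (I : Type) (s : nat -> I) (gT : finGroupType)
    (G : {group gT}) : Prop :=
  forall H K : {group gT},
    sigma_quasinormal s H K -> sigma_quasinormal s K G ->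
    sigma_quasinormal s H G.

From mathcomp Require Import all_boot all_fingroup.
Local Open Scope group_scope.

Set Implicit Arguments. Unset Strict Implicit.

(* Both the quotient map G -> G/N and taking preimages in G of subgroups of
   G/N preserve sigma-quasinormality (for subgroups containing N in the
   first case).  Sigma-subnormal chains transport step by step: images and
   preimages preserve normality, and the index of the core can only shrink to
   a divisor, while divisors of sigma-primary numbers stay sigma-primary.
   Modularity transports because, by the Dedekind law, a subgroup S
   containing W with S :&: N contained in W is already determined by its
   image modulo N.  So H <= K <= G/N lifts to G, the hypothesis on G applies
   there, and the conclusion descends to G/N. *)

Section SigmaSubnormal.

Variables (I : Type) (s : nat -> I).

Lemma sigma_primary_nat_dvd (m n : nat) :
  0 < n -> m %| n -> sigma_primary_nat s n -> sigma_primary_nat s m.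
Proof.
move=> n_gt0 dvd_mn [i sigma_n]; exists i => p.
rewrite mem_primes => /and3P[pr_p _ dvd_pm]; apply: sigma_n.
by rewrite mem_primes pr_p n_gt0 (dvdn_trans dvd_pm dvd_mn).
Qed.

Lemma sigma_primary_core_index (gT : finGroupType) (A B C : {group gT}) :
    C \subset A -> B \subset 'N(C) ->
  sigma_primary_nat s #|B : C| -> sigma_primary_nat s #|B / gcore A B|.
Proof.
move=> sCA nCB; apply: sigma_primary_nat_dvd; first exact: indexg_gt0.
by rewrite card_quotient ?gcore_norm // indexgS // gcore_max.
Qed.

Lemma sigma_subnormal_sub (gT : finGroupType) (A G : {group gT}) :
  sigma_subnormal s A G -> A \subset G.
Proof.
elim=> [// | A1 B1 G1 [sAB _] _ sBG]; exact: subset_trans sBG.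
Qed.

Variables (aT rT : finGroupType) (D : {group aT}) (f : {morphism D >-> rT}).

Lemma sigma_step_morphim (A B : {group aT}) :
  B \subset D -> sigma_step s A B -> sigma_step s (f @* A)%G (f @* B)%G.
Proof.
move=> sBD [sAB [nAB | spB]]; split; rewrite ?morphimS //.
  by left; exact: morphim_normal.
right; apply: (@sigma_primary_core_index _ _ _ (f @* gcore A B)%G).
- by rewrite morphimS ?gcore_sub.
- by rewrite morphim_norms ?gcore_norm.
apply: sigma_primary_nat_dvd spB; first exact: cardG_gt0.
by rewrite card_quotient ?gcore_norm // index_morphim // subIset ?sBD.
Qed.

Lemma sigma_step_morphpre (A B : {group rT}) :
    B \subset f @* D ->
  sigma_step s A B -> sigma_step s (f @*^-1 A)%G (f @*^-1 B)%G.
Proof.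
move=> sBfD [sAB [nAB | spB]]; split; rewrite ?morphpreS //.
  by left; rewrite morphpre_normal // (subset_trans sAB).
right; apply: (@sigma_primary_core_index _ _ _ (f @*^-1 gcore A B)%G).
- by rewrite morphpreS ?gcore_sub.
- by rewrite morphpre_norms ?gcore_norm.
by rewrite index_morphpre // -card_quotient ?gcore_norm.
Qed.

Lemma sigma_subnormal_morphim (A G : {group aT}) :
    G \subset D ->
  sigma_subnormal s A G -> sigma_subnormal s (f @* A)%G (f @* G)%G.
Proof.
move=> sGD ssnAG; elim: ssnAG sGD => [G1 _ | A1 B1 G1 stAB ssnBG IH sGD].
  exact: ssn_refl.
apply: ssn_step (IH sGD); apply: sigma_step_morphim stAB.
exact: subset_trans (sigma_subnormal_sub ssnBG) sGD.
Qed.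

Lemma sigma_subnormal_morphpre (A G : {group rT}) :
    G \subset f @* D ->
  sigma_subnormal s A G -> sigma_subnormal s (f @*^-1 A)%G (f @*^-1 G)%G.
Proof.
move=> sGfD ssnAG; elim: ssnAG sGfD => [G1 _ | A1 B1 G1 stAB ssnBG IH sGfD].
  exact: ssn_refl.
apply: ssn_step (IH sGfD); apply: sigma_step_morphpre stAB.
exact: subset_trans (sigma_subnormal_sub ssnBG) sGfD.
Qed.

End SigmaSubnormal.

Section Modularity.

Variables (gT : finGroupType) (N : {group gT}).

Lemma modular_law_sub (X A Z : {group gT}) :
  X \subset Z -> X <*> (A :&: Z) \subset (X <*> A) :&: Z.
Proof.
move=> sXZ; rewrite subsetI !join_subG sXZ subsetIr joing_subl /= andbT.
exact: subset_trans (subsetIl _ _) (joing_subr _ _).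
Qed.

(* The Dedekind law turns [S \subset N * W] into [S \subset (S :&: N) * W]. *)
Lemma eq_quotient_subG (W S : {group gT}) :
    S \subset 'N(N) -> W \subset S -> S :&: N \subset W ->
  S / N \subset W / N -> S :=: W.
Proof.
move=> nNS sWS sSN_W sSWq; apply/eqP; rewrite eqEsubset sWS andbT.
have nNW : W \subset 'N(N) := subset_trans sWS nNS.
rewrite sub_quotient_pre // quotientK // in sSWq.
rewrite -(setIidPl sSWq) -group_modr //.
exact: mul_subG sSN_W (subxx W).
Qed.

Lemma modular_cosetpre (A B : {group coset_of N}) :
  modular A B -> modular (coset N @*^-1 A)%G (coset N @*^-1 B)%G.
Proof.
set A' := (coset N @*^-1 A)%G; set B' := (coset N @*^-1 B)%G.
case=> sAB [modAX modAY]; split; first exact: morphpreS.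
have nNB' : B' \subset 'N(N) := morphpre_sub _ _.
have nNA' : A' \subset 'N(N) := morphpre_sub _ _.
have sNA' : N \subset A' := sub_cosetpre A.
have quo_sub_B (Z : {group gT}) : Z \subset B' -> Z / N \subset B.
  by move=> sZB'; rewrite sub_quotient_pre // (subset_trans sZB').
split=> [X Z sXZ sZB' | Y Z sYB' sZB' sA'Z]; symmetry.
- have nNZ := subset_trans sZB' nNB'; have nNX := subset_trans sXZ nNZ.
  apply: eq_quotient_subG; rewrite ?modular_law_sub //.
  + exact: subset_trans (subsetIr _ _) nNZ.
  + apply: subset_trans (joing_subr X _).
    by rewrite subsetI (subset_trans (subsetIr _ _) sNA') subIset ?subsetIr.
  apply: subset_trans (quotientI _ _ _) _.
  have nNA'Z : A' :&: Z \subset 'N(N) := subset_trans (subsetIl _ _) nNA'.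
  rewrite (quotientY nNX nNA') (quotientY nNX nNA'Z) (quotientGI Z sNA').
  rewrite cosetpreK.
  by rewrite -(modAX (X / N)%G (Z / N)%G) ?quotientS ?quo_sub_B.
- have nNZ := subset_trans sZB' nNB'; have nNY := subset_trans sYB' nNB'.
  apply: eq_quotient_subG; rewrite ?modular_law_sub //.
  + exact: subset_trans (subsetIr _ _) nNZ.
  + by rewrite (subset_trans (subsetIr _ _)) // (subset_trans sNA') ?joing_subl.
  apply: subset_trans (quotientI _ _ _) _.
  have sNZ := subset_trans sNA' sA'Z.
  have nNYZ : Y :&: Z \subset 'N(N) := subset_trans (subsetIl _ _) nNY.
  rewrite (quotientY nNA' nNY) (quotientY nNA' nNYZ) (quotientIG Y sNZ).
  rewrite cosetpreK -(modAY (Y / N)%G (Z / N)%G) ?quo_sub_B //.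
  by rewrite -(cosetpreK A) quotientS.
Qed.

Lemma modular_quotient (A G : {group gT}) :
  N <| G -> N \subset A -> modular A G -> modular (A / N)%G (G / N)%G.
Proof.
move=> nsNG sNA [sAG [modAX modAY]]; split; first exact: quotientS.
have nNA : A \subset 'N(N) := subset_trans sAG (normal_norm nsNG).
have cosetpre_sub_G (Z : {group coset_of N}) :
    Z \subset G / N -> coset N @*^-1 Z \subset G.
  by move=> sZG; rewrite -(quotientGK nsNG) morphpreS.
split=> [X Z sXZ sZG | Y Z sYG sZG sAZ].
- have nNX : coset N @*^-1 X \subset 'N(N) := morphpre_sub _ _.
  have nNAZ : A :&: coset N @*^-1 Z \subset 'N(N) :=
    subset_trans (subsetIl _ _) nNA.
  have := congr1 (fun S => S / N)
    (modAX _ _ (morphpreS _ sXZ) (cosetpre_sub_G _ sZG)).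
  rewrite /= (quotientY nNX nNAZ) (quotientGI _ sNA).
  by rewrite (quotientIG _ (sub_cosetpre Z)) (quotientY nNX nNA) !cosetpreK.
- have nNY : coset N @*^-1 Y \subset 'N(N) := morphpre_sub _ _.
  have nNYZ : coset N @*^-1 Y :&: coset N @*^-1 Z \subset 'N(N) :=
    subset_trans (subsetIl _ _) nNY.
  have sAZ' : A \subset coset N @*^-1 Z by rewrite -sub_quotient_pre.
  have := congr1 (fun S => S / N)
    (modAY _ _ (cosetpre_sub_G _ sYG) (cosetpre_sub_G _ sZG) sAZ').
  rewrite /= (quotientY nNA nNYZ) !(quotientIG _ (sub_cosetpre Z)).
  by rewrite (quotientY nNA nNY) !cosetpreK.
Qed.

End Modularity.

Section SigmaQuasinormal.

Variables (I : Type) (s : nat -> I) (gT : finGroupType) (N : {group gT}).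

Lemma sigma_quasinormal_cosetpre (A B : {group coset_of N}) :
    sigma_quasinormal s A B ->
  sigma_quasinormal s (coset N @*^-1 A)%G (coset N @*^-1 B)%G.
Proof.
case=> ssnAB modAB; split; last exact: modular_cosetpre.
by apply: sigma_subnormal_morphpre ssnAB; apply: sub_im_coset.
Qed.

Lemma sigma_quasinormal_quotient (A G : {group gT}) :
    N <| G -> N \subset A ->
  sigma_quasinormal s A G -> sigma_quasinormal s (A / N)%G (G / N)%G.
Proof.
move=> nsNG sNA [ssnAG modAG]; split; last exact: modular_quotient.
exact: sigma_subnormal_morphim (normal_norm nsNG) ssnAG.
Qed.

End SigmaQuasinormal.

Theorem lemma2p4 (I : Type) (s : nat -> I) (gT : finGroupType)
    (G N : {group gT}) :
  N <| G -> QsigmaT s G -> QsigmaT s (G / N)%G.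
Proof.
move=> nsNG QG H K qnHK qnKG.
have preG : (coset N @*^-1 (G / N))%G = G by apply: val_inj; exact: quotientGK.
have preH : ((coset N @*^-1 H) / N)%G = H by apply: val_inj; exact: cosetpreK.
have qnH'K' := sigma_quasinormal_cosetpre qnHK.
have := sigma_quasinormal_cosetpre qnKG; rewrite preG => qnK'G.
rewrite -preH; apply: sigma_quasinormal_quotient nsNG (sub_cosetpre H) _.
exact: QG qnH'K' qnK'G.
Qed.
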